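(* Let $\mathbf{A}$ be a countable UL-chain and let $\mathscr{K}_2$ be the class of all finite $\mathbf{A}$-structures $\langle\mathbf{A},\mathbf{M}\rangle$ in the language with a single binary relation symbol $<$ such that for all $a,b,c\in M$: $\|a<a\|^{\mathbf{A}}_{\mathbf{M}}\ge\bar 1$; $\|(a<b\wedge b<c)\to a<c\|^{\mathbf{A}}_{\mathbf{M}}\ge\bar 1$; and $\|a<b\vee b<a\|^{\mathbf{A}}_{\mathbf{M}}\ge\bar 1$. Then $\mathscr{K}_2^{\cong}$ is a Fraïssé class, i.e. a countable set of finitely generated $\mathbf{A}$-structures having the hereditary property, the joint embedding property and the amalgamation property.
   Context: A UL-algebra is $\mathbf{A}=\langle A,\wedge,\vee,\&,\to,\bar 0,\bar 1,\bot,\top\rangle$ where $\langle A,\wedge,\vee,\bot,\top\rangle$ is a bounded lattice, $\langle A,\&,\bar 1\rangle$ is a commutative monoid, $a\& b\le c$ iff $b\le a\to c$, and $((a\to b)\wedge\bar 1)\vee((b\to a)\wedge \bar 1)=\bar 1$; a UL-chain is one with linear order. An $\mathbf{A}$-structure for $\{<\}$ is a set $M$ with a function $<_{\mathbf{M}}:M^2\to A$, $\|a<b\|^{\mathbf{A}}_{\mathbf{M}}=<_{\mathbf{M}}(a,b)$, compound formulas evaluated by the operations of $\mathbf{A}$. Substructure: subset with restricted relation. Embedding: injective map preserving the values of $<$, identity on $\mathbf{A}$; isomorphism: surjective embedding. $\mathscr{K}^{\cong}$: one representative of each isomorphism type in $\mathscr{K}$. Hereditary property: closed under substructures (up to isomorphism).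 Joint embedding property: any two members embed into a common member. Amalgamation property: whenever $\mathbf{M}_0$ is a substructure of both $\mathbf{M}_1$ and $\mathbf{M}_2$, all in the class, there are a member $\mathbf{M}_3$ and embeddings $f_1:\mathbf{M}_1\to\mathbf{M}_3$, $f_2:\mathbf{M}_2\to\mathbf{M}_3$ agreeing on $M_0$. *)

From Stdlib Require Import List.

Record ULAlg := {
  car :> Type;
  meet : car -> car -> car;
  join : car -> car -> car;
  mul : car -> car -> car;
  imp : car -> car -> car;
  zero1 : car;
  one1 : car;
  bot : car;
  top : car
}.

Definition le (A : ULAlg) (x y : A) : Prop := meet A x y = x.

Definition is_UL_algebra (A : ULAlg) : Prop :=
  (forall x y z : A, meet A x (meet A y z) = meet A (meet A x y) z) /\
  (forall x y z : A, join A x (join A y z) = join A (join A x y) z) /\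
  (forall x y : A, meet A x y = meet A y x) /\
  (forall x y : A, join A x y = join A y x) /\
  (forall x y : A, meet A x (join A x y) = x) /\
  (forall x y : A, join A x (meet A x y) = x) /\
  (forall x : A, join A (bot A) x = x) /\
  (forall x : A, meet A (top A) x = x) /\
  (forall x y z : A, mul A x (mul A y z) = mul A (mul A x y) z) /\
  (forall x y : A, mul A x y = mul A y x) /\
  (forall x : A, mul A (one1 A) x = x) /\
  (forall a b c : A, le A (mul A a b) c <-> le A b (imp A a c)) /\
  (forall a b : A, join A (meet A (imp A a b) (one1 A)) (meet A (imp A b a) (one1 A)) = one1 A).

Definition is_UL_chain (A : ULAlg) : Prop :=
  is_UL_algebra A /\ forall x y : A, le A x y \/ le A y x.

Definition countable_carrier (A : ULAlg) : Prop :=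
  exists e : nat -> A, forall x : A, exists n, e n = x.

Record Astr (A : ULAlg) := {
  dom : Type;
  rel : dom -> dom -> A
}.
Arguments dom {A} _.
Arguments rel {A} _ _ _.

Definition finite_str {A : ULAlg} (M : Astr A) : Prop :=
  exists l : list (dom M), forall x, In x l.

Definition substr {A : ULAlg} (M : Astr A) (P : dom M -> Prop) : Astr A :=
  {| dom := {x : dom M | P x};
     rel := fun a b => rel M (proj1_sig a) (proj1_sig b) |}.

Definition is_embedding {A : ULAlg} (M N : Astr A) (f : dom M -> dom N) : Prop :=
  (forall a b, f a = f b -> a = b) /\
  (forall a b, rel N (f a) (f b) = rel M a b).

Definition isomorphic {A : ULAlg} (M N : Astr A) : Prop :=
  exists f : dom M -> dom N, is_embedding M N f /\ forall y, exists x, f x = y.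

Definition K2 (A : ULAlg) (M : Astr A) : Prop :=
  finite_str M /\
  (forall a : dom M, le A (one1 A) (rel M a a)) /\
  (forall a b c : dom M,
      le A (one1 A) (imp A (meet A (rel M a b) (rel M b c)) (rel M a c))) /\
  (forall a b : dom M, le A (one1 A) (join A (rel M a b) (rel M b a))).

(* K^{cong} is a Fraisse class, phrased on the isomorphism-closed class K:
   countably many isomorphism types, all finitely generated (= finite, the
   language is relational), HP, JEP, AP. *)
Definition Fraisse_class {A : ULAlg} (K : Astr A -> Prop) : Prop :=
  (exists e : nat -> Astr A,
      (forall n, K (e n)) /\ (forall M, K M -> exists n, isomorphic M (e n))) /\
  (forall M, K M -> finite_str M) /\
  (forall M (P : dom M -> Prop), K M ->
      exists N, K N /\ isomorphic (substr M P) N) /\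
  (forall M1 M2, K M1 -> K M2 ->
      exists M3 (f1 : dom M1 -> dom M3) (f2 : dom M2 -> dom M3),
        K M3 /\ is_embedding M1 M3 f1 /\ is_embedding M2 M3 f2) /\
  (forall M0 M1 M2 (g1 : dom M0 -> dom M1) (g2 : dom M0 -> dom M2),
      K M0 -> K M1 -> K M2 ->
      is_embedding M0 M1 g1 -> is_embedding M0 M2 g2 ->
      exists M3 (f1 : dom M1 -> dom M3) (f2 : dom M2 -> dom M3),
        K M3 /\ is_embedding M1 M3 f1 /\ is_embedding M2 M3 f2 /\
        forall x : dom M0, f1 (g1 x) = f2 (g2 x)).

(* On a chain, 1 <= (x -> y) holds iff x <= y, so the members of K_2 are the finite
   A-valued relations that are reflexive (values >= 1), min-transitive and strongly
   complete (||a<b|| >= 1 or ||b<a|| >= 1); this is preserved by substructures and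
   isomorphisms.  To amalgamate M1 and M2 over M0, give a<b (a in M1, b a new point of
   M2) the largest value keeping min-transitivity through M0, a finite meet of Goedel
   implications, and give b<a the least value forced through M0, raised to 1 when the
   value of a<b is below 1.  Raising is harmless because then the value of a<b is
   already below the forced value of b<a, so every transitivity check reduces to one
   through M0.  Joint embedding is amalgamation over the empty structure, and there are
   countably many isomorphism types because a finite structure is determined up to
   isomorphism by a finite table of codes of its values. *)

From Pilot Require Import Defs.
From Stdlib Require Import Classical ClassicalEpsilon ProofIrrelevance List Lia Cantor Setoid.

Set Implicit Arguments.

Section Chain.
Variable A : ULAlg.
Hypothesis HA : is_UL_chain A.

Local Notation le := (Defs.le A).
Local Notation meet := (Defs.meet A).
Local Notation join := (Defs.join A).
Local Notation one := (one1 A).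

Local Ltac UL_axiom :=
  destruct HA as [(? & ? & ? & ? & ? & ? & ? & ? & ? & ? & ? & ? & ?) ?]; auto.

Lemma meetA x y z : meet x (meet y z) = meet (meet x y) z. Proof. UL_axiom. Qed.
Lemma meetC x y : meet x y = meet y x. Proof. UL_axiom. Qed.
Lemma joinC x y : join x y = join y x. Proof. UL_axiom. Qed.
Lemma meetKU x y : meet x (join x y) = x. Proof. UL_axiom. Qed.
Lemma joinKI x y : join x (meet x y) = x. Proof. UL_axiom. Qed.
Lemma join_botl x : join (bot A) x = x. Proof. UL_axiom. Qed.
Lemma meet_topl x : meet (top A) x = x. Proof. UL_axiom. Qed.
Lemma mulC x y : mul A x y = mul A y x. Proof. UL_axiom. Qed.
Lemma mul1 x : mul A one x = x. Proof. UL_axiom. Qed.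
Lemma residuation a b c : le (mul A a b) c <-> le b (imp A a c). Proof. UL_axiom. Qed.
Lemma le_total x y : le x y \/ le y x. Proof. UL_axiom. Qed.

Lemma le_refl x : le x x.
Proof. pose proof (meetKU x (meet x x)) as H. rewrite joinKI in H. exact H. Qed.

Lemma le_trans x y z : le x y -> le y z -> le x z.
Proof. unfold Defs.le; intros Hxy Hyz. rewrite <- Hxy, <- meetA, Hyz. reflexivity. Qed.

Lemma meet_le_l x y : le (meet x y) x.
Proof.
  unfold Defs.le. rewrite (meetC (meet x y) x), meetA. f_equal. apply le_refl.
Qed.

Lemma meet_le_r x y : le (meet x y) y.
Proof. rewrite meetC. apply meet_le_l. Qed.

Lemma join_ge_l x y : le x (join x y).
Proof. apply meetKU. Qed.

Lemma join_ge_r x y : le y (join x y).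
Proof. rewrite joinC. apply join_ge_l. Qed.

Lemma bot_le x : le (bot A) x.
Proof. pose proof (meetKU (bot A) x) as H. rewrite join_botl in H. exact H. Qed.

Lemma le_top x : le x (top A).
Proof. unfold Defs.le. rewrite meetC. apply meet_topl. Qed.

Lemma nle_le x y : ~ le x y -> le y x.
Proof. destruct (le_total x y); tauto. Qed.

Lemma join_idr x y : le x y -> join x y = y.
Proof. unfold Defs.le. intros <-. rewrite joinC, meetC. apply joinKI. Qed.

Lemma le_meet_iff x y z : le z (meet x y) <-> le z x /\ le z y.
Proof.
  split.
  - intro H. split; [exact (le_trans H (meet_le_l x y)) | exact (le_trans H (meet_le_r x y))].
  - unfold Defs.le. intros [Hx Hy]. rewrite meetA, Hx, Hy. reflexivity.
Qed.

Lemma meet_le_iff x y z : le (meet x y) z <-> le x z \/ le y z.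
Proof.
  split.
  - destruct (le_total x y) as [H|H].
    + rewrite H. auto.
    + rewrite meetC, H. auto.
  - intros [H|H]; [exact (le_trans (meet_le_l x y) H) | exact (le_trans (meet_le_r x y) H)].
Qed.

Lemma le_join_iff x y z : le z (join x y) <-> le z x \/ le z y.
Proof.
  split.
  - destruct (le_total x y) as [H|H].
    + rewrite (join_idr H). auto.
    + rewrite joinC, (join_idr H). auto.
  - intros [H|H]; [exact (le_trans H (join_ge_l x y)) | exact (le_trans H (join_ge_r x y))].
Qed.

Lemma join_le_iff x y z : le (join x y) z <-> le x z /\ le y z.
Proof.
  split.
  - intro H. split; [exact (le_trans (join_ge_l x y) H) | exact (le_trans (join_ge_r x y) H)].
  - intros [Hx Hy]. destruct (le_total x y) as [H|H].
    + rewrite (join_idr H). exact Hy.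
    + rewrite joinC, (join_idr H). exact Hx.
Qed.

Lemma one_le_imp x y : le one (imp A x y) <-> le x y.
Proof. rewrite <- residuation, mulC, mul1. reflexivity. Qed.

Section BigOps.
Variables (T : Type) (F : T -> A).

Definition bigmeet (l : list T) : A := fold_right (fun w acc => meet (F w) acc) (top A) l.
Definition bigjoin (l : list T) : A := fold_right (fun w acc => join (F w) acc) (bot A) l.

Lemma bigmeet_le {l w} : In w l -> le (bigmeet l) (F w).
Proof.
  induction l as [|w' l IH]; simpl; [tauto|]. intros [<-|Hw].
  - apply meet_le_l.
  - exact (le_trans (meet_le_r _ _) (IH Hw)).
Qed.

Lemma le_bigmeet l v : (forall w, In w l -> le v (F w)) -> le v (bigmeet l).
Proof.
  induction l as [|w l IH]; simpl; intro H.
  - apply le_top.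
  - apply le_meet_iff. auto.
Qed.

Lemma not_le_bigmeet l v : ~ le v (bigmeet l) -> exists w, In w l /\ ~ le v (F w).
Proof.
  intro H. apply NNPP. intro Hn. apply H, le_bigmeet. intros w Hw.
  apply NNPP. intro Hv. eauto.
Qed.

Lemma le_bigjoin {l w} : In w l -> le (F w) (bigjoin l).
Proof.
  induction l as [|w' l IH]; simpl; [tauto|]. intros [<-|Hw].
  - apply join_ge_l.
  - exact (le_trans (IH Hw) (join_ge_r _ _)).
Qed.

Lemma bigjoin_meet_le l x y :
  (forall w, In w l -> le (meet (F w) x) y) -> le (meet (bigjoin l) x) y.
Proof.
  induction l as [|w l IH]; simpl; intro H.
  - exact (le_trans (meet_le_l _ _) (bot_le y)).
  - pose proof (H w (or_introl eq_refl)) as Hw.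
    pose proof (IH (fun w' Hw' => H w' (or_intror Hw'))) as Hl.
    rewrite meet_le_iff, join_le_iff in *. tauto.
Qed.

End BigOps.

Definition godel_imp (u v : A) : A :=
  if excluded_middle_informative (le u v) then top A else v.

Lemma le_godel_imp t u v : le t (godel_imp u v) <-> le (meet t u) v.
Proof.
  unfold godel_imp. destruct excluded_middle_informative as [H|H]; split; intro H'.
  - exact (le_trans (meet_le_r t u) H).
  - apply le_top.
  - apply meet_le_iff. left. exact H'.
  - apply meet_le_iff in H'. tauto.
Qed.

Lemma godel_imp_cases u v :
  (le u v /\ godel_imp u v = top A) \/ (~ le u v /\ godel_imp u v = v).
Proof. unfold godel_imp. destruct excluded_middle_informative; auto. Qed.

End Chain.

Arguments bigmeet {A T} F l.
Arguments bigjoin {A T} F l.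
Arguments godel_imp {A} u v.
Arguments godel_imp_cases {A} u v.

(* A decision procedure for chain inequalities: comparisons with meets and joins split
   into comparisons of their arguments, and the negated goal is refuted by a cycle of
   inequalities through a strict one. *)
Ltac chain_reach HA n :=
  match goal with
  | |- Defs.le _ ?u ?u => apply (le_refl HA)
  | |- Defs.le _ (bot _) _ => apply (bot_le HA)
  | |- Defs.le _ _ (top _) => apply (le_top HA)
  | |- Defs.le _ _ _ => assumption
  | |- Defs.le ?A ?u ?v =>
      match n with
      | S ?m => match goal with
                | H : Defs.le A u ?w |- _ => apply (le_trans HA H); chain_reach HA m
                end
      end
  end.

Ltac chain HA :=
  try (match goal with |- Defs.le _ _ _ => apply NNPP; intro end);
  repeat first [ rewrite (meet_le_iff HA) in * | rewrite (le_meet_iff HA) in *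
               | rewrite (join_le_iff HA) in * | rewrite (le_join_iff HA) in * ];
  repeat match goal with
  | H : ~ (_ \/ _) |- _ => apply not_or_and in H
  | H : ~ (_ /\ _) |- _ => apply not_and_or in H
  | H : _ /\ _ |- _ => destruct H
  | H : _ \/ _ |- _ => destruct H
  end;
  repeat match goal with
  | H : ~ Defs.le ?A ?u ?v |- _ =>
      lazymatch goal with
      | _ : Defs.le A v u |- _ => fail
      | _ => pose proof (nle_le HA H)
      end
  end;
  match goal with
  | H : ~ Defs.le _ _ _ |- _ => apply H; chain_reach HA 6
  end.

Section K2Facts.
Variable A : ULAlg.
Hypothesis HA : is_UL_chain A.
Variable M : Astr A.

Local Notation le := (Defs.le A).
Local Notation one := (one1 A).

Lemma K2_trans : K2 A M -> forall a b c, le (meet A (rel M a b) (rel M b c)) (rel M a c).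
Proof. intros (_ & _ & Htr & _) a b c. apply (one_le_imp HA), Htr. Qed.

Lemma K2_total : K2 A M -> forall a b, le one (rel M a b) \/ le one (rel M b a).
Proof. intros (_ & _ & _ & Htot) a b. apply (le_join_iff HA), Htot. Qed.

Lemma K2_intro :
  finite_str M -> (forall a, le one (rel M a a)) ->
  (forall a b c, le (meet A (rel M a b) (rel M b c)) (rel M a c)) ->
  (forall a b, le one (rel M a b) \/ le one (rel M b a)) -> K2 A M.
Proof.
  intros Hfin Hrefl Htr Htot. repeat split; auto.
  - intros a b c. apply (one_le_imp HA), Htr.
  - intros a b. apply (le_join_iff HA), Htot.
Qed.

End K2Facts.

Lemma K2_iso A (M N : Astr A) : isomorphic M N -> K2 A M -> K2 A N.
Proof.
  intros [f [[_ Hrel] Hsurj]] [[l Hl] (Hrefl & Htr & Htot)].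
  split; [|split; [|split]].
  - exists (map f l). intro y. destruct (Hsurj y) as [x <-]. apply in_map, Hl.
  - intro y. destruct (Hsurj y) as [x <-]. rewrite Hrel. apply Hrefl.
  - intros y1 y2 y3.
    destruct (Hsurj y1) as [x1 <-], (Hsurj y2) as [x2 <-], (Hsurj y3) as [x3 <-].
    rewrite !Hrel. apply Htr.
  - intros y1 y2. destruct (Hsurj y1) as [x1 <-], (Hsurj y2) as [x2 <-].
    rewrite !Hrel. apply Htot.
Qed.

Lemma isomorphic_refl A (M : Astr A) : isomorphic M M.
Proof. exists (fun x => x). repeat split; eauto. Qed.

Lemma finite_substr A (M : Astr A) (P : dom M -> Prop) :
  finite_str M -> finite_str (substr M P).
Proof.
  intros [l Hl].
  exists (fold_right (fun y acc => match excluded_middle_informative (P y) with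
                                   | left p => exist P y p :: acc
                                   | right _ => acc end) nil l).
  intros [x px]. specialize (Hl x). induction l as [|y l IH]; simpl in *; [tauto|].
  destruct Hl as [->|Hl].
  - destruct excluded_middle_informative as [p|n]; [|contradiction].
    left. f_equal. apply proof_irrelevance.
  - destruct excluded_middle_informative; [right|]; auto.
Qed.

Lemma K2_substr A (M : Astr A) (P : dom M -> Prop) : K2 A M -> K2 A (substr M P).
Proof.
  intros (Hfin & Hrefl & Htr & Htot). split; [now apply finite_substr|].
  split; [|split]; intros; simpl; auto.
Qed.

Definition empty_str (A : ULAlg) : Astr A :=
  {| dom := Empty_set; rel := fun x _ => match x with end |}.

Lemma K2_empty A : K2 A (empty_str A).
Proof. split; [exists nil|]; repeat split; intros []. Qed.

Lemma empty_embedding A (M : Astr A) :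
  is_embedding (empty_str A) M (fun x => match x with end).
Proof. split; intros []. Qed.

Definition in_image {X Y : Type} (g : X -> Y) (y : Y) : Prop := exists x, g x = y.

Definition preim {X Y : Type} {g : X -> Y} {y : Y} (H : in_image g y) : X :=
  proj1_sig (constructive_indefinite_description _ H).

Lemma preim_inj X Y (g : X -> Y) (Hg : forall x x', g x = g x' -> x = x')
  {x} (H : in_image g (g x)) : preim H = x.
Proof.
  apply Hg. unfold preim.
  destruct constructive_indefinite_description. assumption.
Qed.

Section Amalgamation.
Variable A : ULAlg.
Hypothesis HA : is_UL_chain A.
Variables (M0 M1 M2 : Astr A) (g1 : dom M0 -> dom M1) (g2 : dom M0 -> dom M2).
Hypotheses (HM1 : K2 A M1) (HM2 : K2 A M2).
Hypotheses (Hg1 : is_embedding M0 M1 g1) (Hg2 : is_embedding M0 M2 g2).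
Variable l0 : list (dom M0).
Hypothesis Hl0 : forall w, In w l0.

Local Notation le := (Defs.le A).
Local Notation meet := (Defs.meet A).
Local Notation join := (Defs.join A).
Local Notation one := (one1 A).
Local Notation r1 := (rel M1).
Local Notation r2 := (rel M2).

Let trans1 := K2_trans HA HM1.
Let trans2 := K2_trans HA HM2.
Let total1 := K2_total HA HM1.
Let total2 := K2_total HA HM2.

Lemma rel_g1_g2 w w' : r1 (g1 w) (g1 w') = r2 (g2 w) (g2 w').
Proof. rewrite (proj2 Hg1), (proj2 Hg2). reflexivity. Qed.

Definition consistent a b v := forall w,
  le (meet v (r2 b (g2 w))) (r1 a (g1 w)) /\ le (meet (r1 (g1 w) a) v) (r2 (g2 w) b).

Definition upper a b : A :=
  bigmeet (fun w => meet (godel_imp (r2 b (g2 w)) (r1 a (g1 w)))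
                         (godel_imp (r1 (g1 w) a) (r2 (g2 w) b))) l0.

Lemma le_upper a b v : le v (upper a b) <-> consistent a b v.
Proof.
  split.
  - intros Hv w. pose proof (le_trans HA Hv (bigmeet_le HA _ (Hl0 w))) as Hw.
    apply (le_meet_iff HA) in Hw as [H1 H2].
    apply (le_godel_imp HA) in H1, H2. rewrite (meetC HA) in H2. auto.
  - intro Hv. apply (le_bigmeet HA). intros w _. destruct (Hv w) as [H1 H2].
    rewrite (meetC HA) in H2. apply (le_meet_iff HA). split; apply (le_godel_imp HA); auto.
Qed.

Definition lower b a : A := bigjoin (fun w => meet (r2 b (g2 w)) (r1 (g1 w) a)) l0.

Lemma le_lower w a b : le (meet (r2 b (g2 w)) (r1 (g1 w) a)) (lower b a).
Proof. exact (le_bigjoin HA (fun w => meet (r2 b (g2 w)) (r1 (g1 w) a)) (Hl0 w)). Qed.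

Lemma lower_meet_le a b x y :
  (forall w, le (meet (meet (r2 b (g2 w)) (r1 (g1 w) a)) x) y) ->
  le (meet (lower b a) x) y.
Proof. intro H. apply (bigjoin_meet_le HA). auto. Qed.

Lemma upper_le_lower {a b} : ~ le one (upper a b) -> le (upper a b) (lower b a).
Proof.
  intro Hu. destruct (not_le_bigmeet HA _ _ Hu) as [w [_ Hw]].
  pose proof (bigmeet_le HA _ (Hl0 w) : le (upper a b) _) as Huw.
  pose proof (le_lower w a b). pose proof (total1 a (g1 w)). pose proof (total2 b (g2 w)).
  destruct (godel_imp_cases (r2 b (g2 w)) (r1 a (g1 w))) as [[_ E1] | [N1 E1]];
  destruct (godel_imp_cases (r1 (g1 w) a) (r2 (g2 w) b)) as [[_ E2] | [N2 E2]];
  cbv beta in *; rewrite E1, E2 in *; chain HA.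
Qed.

Definition back b a : A :=
  if excluded_middle_informative (le one (upper a b)) then lower b a
  else join (lower b a) one.

Lemma lower_le_back b a : le (lower b a) (back b a).
Proof.
  unfold back. destruct excluded_middle_informative.
  - apply (le_refl HA).
  - apply (join_ge_l HA).
Qed.

Lemma one_le_back {b a} : ~ le one (upper a b) -> le one (back b a).
Proof.
  unfold back. destruct excluded_middle_informative; [contradiction|].
  intros _. apply (join_ge_r HA).
Qed.

Lemma back_meet_le b a x y :
  le (meet (lower b a) x) y -> (~ le one (upper a b) -> le (meet one x) y) ->
  le (meet (back b a) x) y.
Proof.
  unfold back. destruct excluded_middle_informative as [Hu|Hu]; intros HL Hone; [exact HL|].
  specialize (Hone Hu). chain HA.
Qed.

Definition cross12 a b : A :=
  match excluded_middle_informative (in_image g1 a) with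
  | left H => r2 (g2 (preim H)) b
  | right _ => upper a b
  end.

Definition cross21 b a : A :=
  match excluded_middle_informative (in_image g1 a) with
  | left H => r2 b (g2 (preim H))
  | right _ => back b a
  end.

Lemma cross12_img z b : cross12 (g1 z) b = r2 (g2 z) b.
Proof.
  unfold cross12. destruct excluded_middle_informative as [H|H].
  - rewrite (preim_inj (proj1 Hg1) H). reflexivity.
  - exfalso. apply H. exists z. reflexivity.
Qed.

Lemma cross21_img z b : cross21 b (g1 z) = r2 b (g2 z).
Proof.
  unfold cross21. destruct excluded_middle_informative as [H|H].
  - rewrite (preim_inj (proj1 Hg1) H). reflexivity.
  - exfalso. apply H. exists z. reflexivity.
Qed.

Lemma cross12_out a (Ha : ~ in_image g1 a) b : cross12 a b = upper a b.
Proof. unfold cross12. destruct excluded_middle_informative; tauto. Qed.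

Lemma cross21_out a (Ha : ~ in_image g1 a) b : cross21 b a = back b a.
Proof. unfold cross21. destruct excluded_middle_informative; tauto. Qed.

Local Ltac image_cases a :=
  let z := fresh "z" in let Ha := fresh "Ha" in
  destruct (classic (in_image g1 a)) as [[z <-] | Ha];
  [rewrite ?cross12_img, ?cross21_img | rewrite ?(cross12_out Ha), ?(cross21_out Ha)].

Lemma consistent_cross12 a b : consistent a b (cross12 a b).
Proof.
  image_cases a.
  - intro w. rewrite !rel_g1_g2. split; apply trans2.
  - apply le_upper, (le_refl HA).
Qed.

Lemma le_cross21 w a b : le (meet (r2 b (g2 w)) (r1 (g1 w) a)) (cross21 b a).
Proof.
  image_cases a.
  - rewrite rel_g1_g2. apply trans2.
  - exact (le_trans HA (le_lower w a b) (lower_le_back b a)).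
Qed.

Lemma cross_total a b : le one (cross12 a b) \/ le one (cross21 b a).
Proof.
  image_cases a.
  - apply total2.
  - destruct (classic (le one (upper a b))) as [H|H]; [left | right; apply one_le_back]; assumption.
Qed.

Lemma consistent_meet_l a a' b v : consistent a' b v -> consistent a b (meet (r1 a a') v).
Proof.
  intros Hv w. destruct (Hv w) as [H1 H2].
  pose proof (trans1 a a' (g1 w)). pose proof (trans1 (g1 w) a a').
  split; chain HA.
Qed.

Lemma consistent_meet_r a b b' v : consistent a b v -> consistent a b' (meet v (r2 b b')).
Proof.
  intros Hv w. destruct (Hv w) as [H1 H2].
  pose proof (trans2 b b' (g2 w)). pose proof (trans2 (g2 w) b b').
  split; chain HA.
Qed.

(* In [trans_ijk] the three points of the transitivity instance lie in Mi, Mj, Mk. *)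
Lemma trans_112 a a' b : le (meet (r1 a a') (cross12 a' b)) (cross12 a b).
Proof.
  pose proof (consistent_cross12 a' b) as Hc.
  image_cases a.
  - exact (proj2 (Hc z)).
  - apply le_upper, consistent_meet_l, Hc.
Qed.

Lemma trans_122 a b b' : le (meet (cross12 a b) (r2 b b')) (cross12 a b').
Proof.
  image_cases a.
  - apply trans2.
  - apply le_upper, consistent_meet_r, le_upper, (le_refl HA).
Qed.

Lemma trans_121 a b a' : le (meet (cross12 a b) (cross21 b a')) (r1 a a').
Proof.
  pose proof (consistent_cross12 a b) as Hc.
  image_cases a'.
  - exact (proj1 (Hc z)).
  - assert (HL : le (meet (lower b a') (cross12 a b)) (r1 a a')).
    { apply lower_meet_le. intro w. destruct (Hc w) as [H1 _].
      pose proof (trans1 a (g1 w) a'). chain HA. }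
    rewrite (meetC HA). apply back_meet_le; [exact HL|]. intro Hu.
    pose proof (total1 a a').
    pose proof (proj2 (le_upper a' b _) (consistent_meet_l a' Hc)).
    pose proof (upper_le_lower Hu).
    chain HA.
Qed.

Lemma trans_211 b a a' : le (meet (cross21 b a) (r1 a a')) (cross21 b a').
Proof.
  image_cases a.
  - apply le_cross21.
  - assert (HL : le (meet (lower b a) (r1 a a')) (cross21 b a')).
    { apply lower_meet_le. intro w.
      pose proof (le_cross21 w a' b). pose proof (trans1 (g1 w) a a'). chain HA. }
    apply back_meet_le; [exact HL|]. intro Hu.
    pose proof (cross_total a' b).
    pose proof (trans_112 a a' b) as H112. rewrite (cross12_out Ha) in H112.
    pose proof (upper_le_lower Hu).
    chain HA.
Qed.

Lemma trans_212 b a b' : le (meet (cross21 b a) (cross12 a b')) (r2 b b').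
Proof.
  image_cases a.
  - apply trans2.
  - assert (HL : le (meet (lower b a) (upper a b')) (r2 b b')).
    { apply lower_meet_le. intro w.
      destruct (proj1 (le_upper a b' _) (le_refl HA _) w) as [_ H2].
      pose proof (trans2 b (g2 w) b'). chain HA. }
    apply back_meet_le; [exact HL|]. intro Hu.
    pose proof (total2 b b').
    pose proof (trans_122 a b' b) as H122. rewrite !(cross12_out Ha) in H122.
    pose proof (upper_le_lower Hu).
    chain HA.
Qed.

Lemma trans_221 b b' a : le (meet (r2 b b') (cross21 b' a)) (cross21 b a).
Proof.
  image_cases a.
  - apply trans2.
  - assert (HL : le (meet (lower b' a) (r2 b b')) (back b a)).
    { apply lower_meet_le. intro w.
      pose proof (trans2 b b' (g2 w)). pose proof (le_lower w a b).
      pose proof (lower_le_back b a). chain HA. }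
    rewrite (meetC HA). apply back_meet_le; [exact HL|]. intro Hu'.
    destruct (classic (le one (upper a b))) as [Hu|Hu].
    + pose proof (trans_122 a b b') as H122. rewrite !(cross12_out Ha) in H122.
      pose proof (upper_le_lower Hu').
      chain HA.
    + pose proof (one_le_back Hu). chain HA.
Qed.

Definition amalgam_dom : Type := (dom M1 + {b : dom M2 | ~ in_image g2 b})%type.

Definition amalgam_rel (x y : amalgam_dom) : A :=
  match x, y with
  | inl a, inl a' => r1 a a'
  | inl a, inr b => cross12 a (proj1_sig b)
  | inr b, inl a => cross21 (proj1_sig b) a
  | inr b, inr b' => r2 (proj1_sig b) (proj1_sig b')
  end.

Definition amalgam : Astr A := {| dom := amalgam_dom; rel := amalgam_rel |}.

Lemma amalgam_trans x y z :
  le (meet (amalgam_rel x y) (amalgam_rel y z)) (amalgam_rel x z).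
Proof.
  destruct x as [a|[b ?]], y as [a'|[b' ?]], z as [a''|[b'' ?]]; simpl;
    auto using trans_112, trans_121, trans_122, trans_211, trans_212, trans_221.
Qed.

Lemma K2_amalgam : K2 A amalgam.
Proof.
  pose proof HM1 as [[l1 Hl1] [Hrefl1 _]]. pose proof HM2 as [Hfin2 [Hrefl2 _]].
  destruct (finite_substr (fun b => ~ in_image g2 b) Hfin2) as [l2 Hl2].
  apply (K2_intro HA).
  - exists (map inl l1 ++ map inr l2).
    intros [a|b]; apply in_or_app; [left | right]; apply in_map; auto.
  - intros [a|b]; simpl; auto.
  - exact amalgam_trans.
  - intros [a|[b ?]] [a'|[b' ?]]; simpl; auto using cross_total.
    apply or_comm, cross_total.
Qed.

Definition emb1 (a : dom M1) : amalgam_dom := inl a.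

Definition emb2 (b : dom M2) : amalgam_dom :=
  match excluded_middle_informative (in_image g2 b) with
  | left H => inl (g1 (preim H))
  | right H => inr (exist _ b H)
  end.

Lemma emb2_img z : emb2 (g2 z) = inl (g1 z).
Proof.
  unfold emb2. destruct excluded_middle_informative as [H|H].
  - rewrite (preim_inj (proj1 Hg2) H). reflexivity.
  - exfalso. apply H. exists z. reflexivity.
Qed.

Lemma emb2_out b (Hb : ~ in_image g2 b) : emb2 b = inr (exist _ b Hb).
Proof.
  unfold emb2. destruct excluded_middle_informative as [H|H]; [contradiction|].
  do 2 f_equal. apply proof_irrelevance.
Qed.

Lemma emb1_embedding : is_embedding M1 amalgam emb1.
Proof. split; [intros a a' E; injection E; auto | reflexivity]. Qed.

Local Ltac emb2_cases b :=
  let z := fresh "z" in let Hb := fresh "Hb" in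
  destruct (classic (in_image g2 b)) as [[z <-] | Hb];
  [rewrite emb2_img | rewrite (emb2_out Hb)].

Lemma emb2_embedding : is_embedding M2 amalgam emb2.
Proof.
  split; intros b b'; emb2_cases b; emb2_cases b'; simpl.
  - intro E. injection E as E. apply (proj1 Hg1) in E. congruence.
  - discriminate.
  - discriminate.
  - intro E. injection E as E. exact E.
  - apply rel_g1_g2.
  - apply cross12_img.
  - apply cross21_img.
  - reflexivity.
Qed.

Lemma emb_commute x : emb1 (g1 x) = emb2 (g2 x).
Proof. rewrite emb2_img. reflexivity. Qed.

End Amalgamation.

Theorem K2_amalgamation A (HA : is_UL_chain A) (M0 M1 M2 : Astr A)
  (g1 : dom M0 -> dom M1) (g2 : dom M0 -> dom M2) :
  K2 A M0 -> K2 A M1 -> K2 A M2 -> is_embedding M0 M1 g1 -> is_embedding M0 M2 g2 ->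
  exists M3 (f1 : dom M1 -> dom M3) (f2 : dom M2 -> dom M3),
    K2 A M3 /\ is_embedding M1 M3 f1 /\ is_embedding M2 M3 f2 /\
    forall x, f1 (g1 x) = f2 (g2 x).
Proof.
  intros [[l0 Hl0] _] HM1 HM2 Hg1 Hg2.
  exists (amalgam _ _ _ g1 g2 l0), (emb1 _ _ _ g2), (emb2 _ _ _ g1 g2).
  split; [|split; [|split]].
  - apply K2_amalgam; assumption.
  - apply emb1_embedding.
  - apply emb2_embedding; assumption.
  - apply emb_commute; assumption.
Qed.

Lemma K2_joint_embedding A (HA : is_UL_chain A) (M1 M2 : Astr A) :
  K2 A M1 -> K2 A M2 ->
  exists M3 (f1 : dom M1 -> dom M3) (f2 : dom M2 -> dom M3),
    K2 A M3 /\ is_embedding M1 M3 f1 /\ is_embedding M2 M3 f2.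
Proof.
  intros HM1 HM2.
  destruct (K2_amalgamation HA (K2_empty A) HM1 HM2 (empty_embedding M1) (empty_embedding M2))
    as (M3 & f1 & f2 & HM3 & Hf1 & Hf2 & _).
  exists M3, f1, f2. auto.
Qed.

Fixpoint decode_list (k c : nat) : list nat :=
  match k with
  | 0 => nil
  | S k => fst (of_nat c) :: decode_list k (snd (of_nat c))
  end.

Definition nat_to_list (n : nat) : list nat := decode_list (fst (of_nat n)) (snd (of_nat n)).

Lemma nat_to_list_surj l : exists n, nat_to_list n = l.
Proof.
  assert (Hdec : exists c, decode_list (length l) c = l).
  { induction l as [|x l [c IH]]; [exists 0; reflexivity|].
    exists (to_nat (x, c)). cbn -[of_nat to_nat]. rewrite cancel_of_to. cbn. rewrite IH. reflexivity. }
  destruct Hdec as [c Hc]. exists (to_nat (length l, c)).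
  unfold nat_to_list. rewrite cancel_of_to. exact Hc.
Qed.

Lemma map_surj T (d : nat -> T) :
  (forall x, exists n, d n = x) -> forall l, exists ns, map d ns = l.
Proof.
  intros Hd l. induction l as [|x l [ns IH]]; [exists nil; reflexivity|].
  destruct (Hd x) as [n Hn]. exists (n :: ns). simpl. rewrite Hn, IH. reflexivity.
Qed.

Definition nat_to_table (n : nat) : list (list nat) := map nat_to_list (nat_to_list n).

Lemma nat_to_table_surj t : exists n, nat_to_table n = t.
Proof.
  destruct (map_surj nat_to_list nat_to_list_surj t) as [ns Hns].
  destruct (nat_to_list_surj ns) as [n Hn].
  exists n. unfold nat_to_table. rewrite Hn. exact Hns.
Qed.

Definition table_str {A : ULAlg} (e : nat -> A) (t : list (list nat)) : Astr A :=
  {| dom := {i : nat | i < length t};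
     rel := fun i j => e (nth (proj1_sig j) (nth (proj1_sig i) t nil) 0) |}.

Lemma finite_iso_table (A : ULAlg) (e : nat -> A) (He : forall v, exists n, e n = v) (M : Astr A) :
  finite_str M -> exists t, isomorphic M (table_str e t).
Proof.
  intros [l0 Hl0].
  destruct (choice _ He) as [code Hcode].
  set (l := nodup (fun x y => excluded_middle_informative (x = y)) l0).
  assert (Hl : forall x, In x l) by (intro x; apply nodup_In, Hl0).
  assert (Hnd : NoDup l) by apply NoDup_nodup.
  set (row := fun x => map (fun y => code (rel M x y)) l).
  exists (map row l).
  assert (Hlen : length (map row l) = length l) by apply length_map.
  assert (Hidx : forall x, {i | i < length l /\ nth i l x = x})
    by (intro x; apply constructive_indefinite_description, In_nth, Hl).
  assert (Hk : forall x, proj1_sig (Hidx x) < length (map row l))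
    by (intro x; rewrite Hlen; apply (proj2_sig (Hidx x))).
  exists (fun x => exist _ (proj1_sig (Hidx x)) (Hk x)).
  split; [split|].
  - intros x y E. apply (f_equal (@proj1_sig _ _)) in E. simpl in E.
    destruct (Hidx x) as [i [Hi Hx]], (Hidx y) as [j [Hj Hy]]. simpl in E. subst j.
    rewrite <- Hx, <- Hy. apply nth_indep. exact Hi.
  - intros x y. simpl. destruct (Hidx x) as [i [Hi Hx]], (Hidx y) as [j [Hj Hy]]. simpl.
    rewrite (nth_indep _ nil (row x)) by (rewrite Hlen; exact Hi).
    rewrite map_nth, Hx. unfold row.
    rewrite (nth_indep _ 0 (code (rel M x y))) by (rewrite length_map; exact Hj).
    rewrite (map_nth (fun y => code (rel M x y)) l y), Hy. apply Hcode.
  - intros [i Hi]. assert (Hil : i < length l) by (rewrite <- Hlen; exact Hi).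
    assert (d : dom M) by (destruct l as [|d ?]; [simpl in Hil; lia | exact d]).
    exists (nth i l d). apply subset_eq_compat.
    destruct (Hidx (nth i l d)) as [j [Hj Hd]]. simpl.
    apply (proj1 (NoDup_nth l d) Hnd); auto.
    rewrite <- Hd. apply nth_indep. exact Hj.
Qed.

Lemma K2_countable_types A (Hc : countable_carrier A) :
  exists enum : nat -> Astr A,
    (forall n, K2 A (enum n)) /\ (forall M, K2 A M -> exists n, isomorphic M (enum n)).
Proof.
  destruct Hc as [e He].
  exists (fun n => if excluded_middle_informative (K2 A (table_str e (nat_to_table n)))
                   then table_str e (nat_to_table n) else empty_str A).
  split.
  - intro n. destruct excluded_middle_informative; [assumption | apply K2_empty].
  - intros M HM. destruct (finite_iso_table e He (proj1 HM)) as [t Ht].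
    destruct (nat_to_table_surj t) as [n <-]. exists n.
    destruct excluded_middle_informative as [_|Hn]; [exact Ht|].
    exfalso. exact (Hn (K2_iso Ht HM)).
Qed.

Theorem proposition3 (A : ULAlg) (HA : is_UL_chain A) (Hc : countable_carrier A) :
  Fraisse_class (K2 A).
Proof.
  split; [|split; [|split; [|split]]].
  - exact (K2_countable_types Hc).
  - intros M HM. exact (proj1 HM).
  - intros M P HM. exists (substr M P). split; [exact (K2_substr P HM) | apply isomorphic_refl].
  - exact (K2_joint_embedding HA).
  - exact (K2_amalgamation HA).
Qed.
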